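(* If a stationary renewal process is a finitary factor of an i.i.d.\ process, then its jump distribution is non-lattice and has exponential tails.
   Context: A (discrete) renewal process is a $\{0,1\}$-valued process $X=(X_n)_{n\in\mathbb Z}$ with infinitely many 1's in both directions such that the distances between consecutive 1's are i.i.d.; their common law, a distribution $T$ on the positive integers, is the jump distribution. $T$ is non-lattice if $\gcd\{t:\mathbb P(T=t)>0\}=1$, and has exponential tails if there are $C,c>0$ with $\mathbb P(T\ge t)\le Ce^{-ct}$ for all $t\ge1$. A process $X$ is a factor of $Y=(Y_n)_{n\in\mathbb Z}$ if $X_n=\varphi(\dots,Y_{n-1},Y_n,Y_{n+1},\dots)$ for a measurable, shift-equivariant $\varphi$; it is finitary if there is an almost surely finite stopping time $R$ for the filtration $\mathcal F_r=\sigma(Y_n:|n|\le r)$ such that $X_0$ is $\mathcal F_R$-measurable. *)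

From HB Require Import structures.
From mathcomp Require Import all_boot all_order all_algebra.
From mathcomp Require Import all_classical all_reals all_analysis.
Set Implicit Arguments. Unset Strict Implicit. Unset Printing Implicit Defensive.
Import Order.TTheory GRing.Theory Num.Theory.
Local Open Scope classical_set_scope.
Local Open Scope ring_scope.

Section Defs.
Context {R : realType} {d : measure_display} {T : measurableType d}.
Context {d' : measure_display} {S : measurableType d'}.

Definition iid_process (P : probability T R) (Y : int -> T -> S) : Prop :=
  [/\ (forall n, measurable_fun setT (Y n)),
      (forall n (A : set S), measurable A ->
          P (Y n @^-1` A) = P (Y 0 @^-1` A)) &
      (forall (s : seq int) (A : int -> set S), uniq s ->
          (forall i, measurable (A i)) ->
          P (\bigcap_(i in [set` s]) (Y i @^-1` A i))
          = (\prod_(i <- s) P (Y i @^-1` A i))%E)].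

Definition cylinder_events : set (set (int -> S)) :=
  [set B | exists k (A : set S), measurable A /\ B = [set y | A (y k)]].

Definition product_measurable (phi : (int -> S) -> bool) : Prop :=
  forall b : bool, <<s cylinder_events >> (phi @^-1` [set b]).

Definition factor_process (phi : (int -> S) -> bool) (Y : int -> T -> S)
    : int -> T -> bool :=
  fun n w => phi (fun k => Y (n + k) w).

Definition filtr (Y : int -> T -> S) (r : nat) : set (set T) :=
  <<s [set B | exists n (A : set S),
         [/\ (`|n| <= r)%N, measurable A & B = Y n @^-1` A]] >>.

(** Stopping times with values in N u {oo} (None = oo). *)
Definition R_le (Rt : T -> option nat) (r : nat) : set T :=
  [set w | exists m, Rt w = Some m /\ (m <= r)%N].

(** X is a finitary factor of Y via phi: phi is measurable and there is an
    a.s. finite stopping time Rt for (F_r) with X_0 being F_Rt-measurable. *)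
Definition finitary_factor (P : probability T R) (Y : int -> T -> S)
    (phi : (int -> S) -> bool) : Prop :=
  product_measurable phi /\
  exists Rt : T -> option nat,
    [/\ P [set w | Rt w = None] = 0%E,
        (forall r, filtr Y r (R_le Rt r)) &
        (forall r (b : bool),
            filtr Y r ([set w | factor_process phi Y 0 w = b] `&` R_le Rt r))].

Fixpoint gaps_from (X : int -> T -> bool) (a : int) (ts : seq nat) (w : T)
    : Prop :=
  match ts with
  | [::] => True
  | t :: ts' => (forall j : nat, (0 < j < t)%N -> X (a + j%:Z) w = false) /\
                X (a + t%:Z) w = true /\ gaps_from X (a + t%:Z) ts' w
  end.

Definition gap_event (X : int -> T -> bool) (a : int) (ts : seq nat) : set T :=
  [set w | X a w = true /\ gaps_from X a ts w].

Definition stationary_renewal (P : probability T R) (X : int -> T -> bool)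
    (p : nat -> R) : Prop :=
  [/\ [/\ p 0%N = 0, (forall t, 0 <= p t) &
          (\sum_(0 <= t <oo) (p t)%:E = 1)%E],
      (forall (s : seq int) (b : int -> bool) (m : int),
          P [set w | forall i, i \in s -> X (i + m) w = b i]
          = P [set w | forall i, i \in s -> X i w = b i]),
      P [set w | forall N : int, (exists n, N < n /\ X n w = true) /\
                                 (exists n, n < N /\ X n w = true)] = 1%E &
      (forall ts : seq nat, all (fun t => (0 < t)%N) ts ->
          P (gap_event X (0%R : int) ts)
          = (P [set w | X (0%R : int) w = true] * \prod_(t <- ts) (p t)%:E)%E)].

Definition non_lattice (p : nat -> R) : Prop :=
  forall g : nat, (forall t, 0 < p t -> (g %| t)%N) -> g = 1%N.

Definition exp_tails (p : nat -> R) : Prop :=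
  exists C c : R, 0 < C /\ 0 < c /\
    forall t : nat, (1 <= t)%N ->
      (\sum_(t <= s <oo) (p s)%:E <= (C * expR (- (c * t%:R)))%:E)%E.

End Defs.

(* Let R be the coding radius of the finitary factor and fix r such that
   eps = P(coded r) > 0, where coded r = {X_0 = 1, R <= r}.  This event is
   determined by Y_{-r}, ..., Y_r, so its translates A_m (determined by Y on
   [m - r, m + r]) all have probability eps, are independent as soon as their
   windows are disjoint, and almost surely force X_m = 1.
   If every jump were a multiple of some g >= 2, two ones at a distance m not
   divisible by g would be a null event, yet A_0 and A_m occur together with
   probability eps^2 > 0 for m > 2r.
   A first jump >= t means that X vanishes on (0, t), so the roughly
   t / (2r + 1) disjoint translates of coded r inside (0, t) all fail; by
   independence this has probability at most (1 - eps)^(t / (2r + 1)). *)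
From HB Require Import structures.
From mathcomp Require Import all_boot all_order all_algebra.
From mathcomp Require Import all_classical all_reals all_analysis.
From mathcomp Require Import ring lra zify.
Set Implicit Arguments. Unset Strict Implicit. Unset Printing Implicit Defensive.
Import Order.TTheory GRing.Theory Num.Theory.
Local Open Scope classical_set_scope.
Local Open Scope ring_scope.

Section set_systems.
Context {U : Type}.
Implicit Types (G D : set (set U)) (A B : set U).

Lemma pi_dynkin_sub G D : setI_closed G -> G `<=` D -> dynkin D -> <<s G >> `<=` D.
Proof.
move=> GI GD dD; rewrite -setI_closed_g_dynkin_g_sigma_algebra //.
exact: smallest_sub.
Qed.

Lemma sigma_algebra_setC G A : sigma_algebra setT G -> G A -> G (~` A).
Proof. by move=> [_ GC _] GA; rewrite -setTD; apply: GC. Qed.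

Lemma sigma_algebra_setU G A B : sigma_algebra setT G -> G A -> G B -> G (A `|` B).
Proof.
move=> [G0 GC GU] GA GB; rewrite -bigcup2E; apply: GU => -[|[|n]] //=.
Qed.

Lemma sigma_algebra_setI G A B : sigma_algebra setT G -> G A -> G B -> G (A `&` B).
Proof.
move=> sG GA GB; rewrite -[A `&` B]setCK setCI.
by apply: sigma_algebra_setC => //; apply: sigma_algebra_setU => //;
  apply: sigma_algebra_setC.
Qed.

Lemma sigma_algebra_setT G : sigma_algebra setT G -> G setT.
Proof. by move=> sG; rewrite -setC0; apply: sigma_algebra_setC => //; case: sG. Qed.

End set_systems.

Lemma trivIset_preimage (I U V : Type) (D : set I) (f : U -> V) (F : I -> set V) :
  trivIset D F -> trivIset D (fun k => f @^-1` F k).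
Proof. by move=> tF i j Di Dj [w [Fi Fj]]; apply: (tF i j) => //; exists (f w). Qed.

Section measurable_guards.
Context {d : measure_display} {T : measurableType d}.

Lemma measurable_guard_and (b : bool) (A : set T) :
  measurable A -> measurable [set w | b /\ A w].
Proof.
case: b => mA; last by rewrite (_ : [set w | _] = set0) //; apply/seteqP; split => w [].
by rewrite (_ : [set w | _] = A) //; apply/seteqP; split => w //= [].
Qed.

Lemma measurable_guard_imply (b : bool) (A : set T) :
  measurable A -> measurable [set w | b -> A w].
Proof.
case: b => mA; last by rewrite (_ : [set w | _] = setT) //; apply/seteqP; split => w.
by rewrite (_ : [set w | _] = A) //; apply/seteqP; split => w /=; [apply|move=> ? _].
Qed.

End measurable_guards.

(* Uses 1 - eps <= e^{-eps}. *)
Lemma geometric_le_expR (R : realType) (eps : R) (L k t : nat) :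
  0 < eps -> eps <= 1 -> (0 < L)%N -> (t <= k.+1 * L)%N ->
  (1 - eps) ^+ k <= expR eps * expR (- (eps / L%:R * t%:R)).
Proof.
move=> eps0 eps1 L0 tk.
apply: (@le_trans _ _ (expR (- eps) ^+ k)).
  by apply: lerXn2r; rewrite ?nnegrE ?subr_ge0 ?expR_ge0 ?expR_ge1Dx.
rewrite -expRM_natr -expRD ler_expR.
have ht : (t%:R : R) <= k.+1%:R * L%:R by rewrite -natrM ler_nat.
have : eps / L%:R * t%:R <= eps / L%:R * (k.+1%:R * L%:R).
  by apply: ler_wpM2l => //; apply: divr_ge0; [exact: ltW|exact: ler0n].
rewrite (_ : eps / L%:R * (k.+1%:R * L%:R) = eps * k%:R + eps); first lra.
by rewrite -[k.+1]addn1 natrD; field; rewrite pnatr_eq0 -lt0n.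
Qed.

Section probability_independence.
Context {R : realType} {d : measure_display} {T : measurableType d}
  (P : probability T R).

Lemma probability_fine (A : set T) : measurable A -> P A = (fine (P A))%:E.
Proof. by move=> mA; rewrite fineK // fin_num_measure. Qed.

Lemma dynkin_indep (E0 : set T) : measurable E0 ->
  dynkin [set F | measurable F /\ P (F `&` E0) = (P F * P E0)%E].
Proof.
move=> mE0; split.
- by split => //; rewrite setTI probability_setT mul1e.
- move=> F [mF HF]; split; first exact: measurableC.
  rewrite probability_setC // (_ : ~` F `&` E0 = E0 `\` F); last first.
    by rewrite setDE setIC.
  rewrite measureD //; last by rewrite (le_lt_trans (probability_le1 _ mE0)) ?ltry.
  transitivity (P E0 - P (F `&` E0))%E; first by rewrite setIC.
  rewrite HF (probability_fine mF) (probability_fine mE0) -!EFinM -!EFinB.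
  by congr EFin; ring.
- move=> F tF HF; split.
    by apply: bigcup_measurable => k _; case: (HF k).
  rewrite setI_bigcupl measure_semi_bigcup; last first.
  + by apply: bigcup_measurable => k _; apply: measurableI => //; case: (HF k).
  + exact: trivIset_setIr.
  + by move=> k; apply: measurableI => //; case: (HF k).
  rewrite measure_semi_bigcup //; last first.
  + by apply: bigcup_measurable => k _; case: (HF k).
  + by move=> k; case: (HF k).
  rewrite muleC (probability_fine mE0) -nneseriesZl; last by move=> *; exact: measure_ge0.
  apply: eq_eseriesr => k _ /=; case: (HF k) => mFk ->.
  by rewrite muleC -probability_fine.
Qed.

End probability_independence.

Section coordinate_sigma_algebras.
Context {R : realType} {d : measure_display} {T : measurableType d}
  (P : probability T R) {d' : measure_display} {S : measurableType d'}
  (Y : int -> T -> S).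
Hypothesis Ymeas : forall n, measurable_fun setT (Y n).
Hypothesis Yindep : forall (s : seq int) (A : int -> set S), uniq s ->
  (forall i, measurable (A i)) ->
  P (\bigcap_(i in [set` s]) (Y i @^-1` A i)) = (\prod_(i <- s) P (Y i @^-1` A i))%E.

Lemma measurable_Y_preimage n (A : set S) : measurable A -> measurable (Y n @^-1` A).
Proof. by move=> mA; rewrite -[_ @^-1` _]setTI; apply: Ymeas. Qed.

Definition coord_sigma (s : seq int) : set (set T) :=
  <<s [set B | exists n (A : set S), [/\ n \in s, measurable A & B = Y n @^-1` A]] >>.

Definition cylinder (s : seq int) (A : int -> set S) : set T :=
  [set w | forall i, i \in s -> A i (Y i w)].

Definition cylinders (s : seq int) : set (set T) :=
  [set E | exists A : int -> set S, (forall i, measurable (A i)) /\ E = cylinder s A].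

Lemma coord_sigma_sigma_algebra s : sigma_algebra setT (coord_sigma s).
Proof. exact: smallest_sigma_algebra. Qed.

Lemma coord_sigma_sub s s' : {subset s <= s'} -> coord_sigma s `<=` coord_sigma s'.
Proof.
move=> ss'; apply: smallest_sub; first exact: smallest_sigma_algebra.
move=> B [n [A [ns mA ->]]]; apply: sub_gen_smallest.
by exists n, A; split => //; apply: ss'.
Qed.

Lemma coord_sigma_measurable s : coord_sigma s `<=` measurable.
Proof.
apply: smallest_sub; first exact: sigma_algebra_measurable.
by move=> E [n [A [_ mA ->]]]; exact: measurable_Y_preimage.
Qed.

Lemma measurable_cylinder s A : (forall i, measurable (A i)) ->
  measurable (cylinder s A).
Proof.
move=> mA; elim: s => [|x s IH].
  by rewrite (_ : cylinder _ _ = setT) //; apply/seteqP; split => w //= _ i.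
rewrite (_ : cylinder _ _ = Y x @^-1` A x `&` cylinder s A).
  by apply: measurableI => //; exact: measurable_Y_preimage.
apply/seteqP; split => w /=.
  by move=> H; split => [|i iS]; apply: H; rewrite inE ?eqxx ?iS ?orbT.
by move=> [H1 H2] i; rewrite inE => /orP[/eqP->//|/H2].
Qed.

Lemma cylinders_measurable s : cylinders s `<=` measurable.
Proof. by move=> E [A [mA ->]]; exact: measurable_cylinder. Qed.

Lemma cylinder_undup s A : cylinder (undup s) A = cylinder s A.
Proof.
by apply/seteqP; split => w /= H i iS; apply: H; rewrite ?mem_undup // -mem_undup.
Qed.

Lemma prob_cylinder s A : uniq s -> (forall i, measurable (A i)) ->
  P (cylinder s A) = (\prod_(i <- s) P (Y i @^-1` A i))%E.
Proof. exact: Yindep. Qed.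

Lemma cylinders_setI s : setI_closed (cylinders s).
Proof.
move=> E F [A [mA ->]] [B [mB ->]]; exists (fun i => A i `&` B i); split.
  by move=> i; apply: measurableI.
apply/seteqP; split => w /=.
  by move=> [H1 H2] i iS; split; [apply: H1|apply: H2].
by move=> H; split => i /H [].
Qed.

Lemma coord_sigma_cylinders s : coord_sigma s `<=` <<s cylinders s >>.
Proof.
apply: smallest_sub; first exact: smallest_sigma_algebra.
move=> E [n [A [ns mA ->]]]; apply: sub_gen_smallest.
exists (fun i => if i == n then A else setT); split; first by move=> i; case: ifP.
apply/seteqP; split => w /=; first by move=> H i _; case: ifP => // /eqP ->.
by move=> /(_ n ns); rewrite eqxx.
Qed.

Lemma indep_cylinders s s' E F : (forall i, i \in s -> i \notin s') ->
  cylinders s E -> cylinders s' F -> P (E `&` F) = (P E * P F)%E.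
Proof.
move=> dis [A [mA ->]] [B [mB ->]].
rewrite -(cylinder_undup s) -(cylinder_undup s').
pose C i := if i \in s then A i else B i.
have mC i : measurable (C i) by rewrite /C; case: ifP.
have sN i : i \in s' -> i \in s = false by apply: contraTF => /dis /negPf ->.
have us : uniq (undup s ++ undup s').
  rewrite cat_uniq !undup_uniq /= andbT; apply/hasPn => i.
  by rewrite !mem_undup => /sN ->.
rewrite (_ : _ `&` _ = cylinder (undup s ++ undup s') C).
  rewrite !prob_cylinder ?undup_uniq // big_cat /=; congr (_ * _)%E.
    by apply: eq_big_seq => i; rewrite mem_undup /C => ->.
  by apply: eq_big_seq => i; rewrite mem_undup /C => /sN ->.
apply/seteqP; split => w /=.
  move=> [H1 H2] i; rewrite mem_cat !mem_undup /C => /orP[iS|iS'].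
    by rewrite iS; apply: H1; rewrite mem_undup.
  by rewrite sN //; apply: H2; rewrite mem_undup.
move=> H; split => i; rewrite mem_undup => iS; move: (H i);
  rewrite mem_cat !mem_undup iS ?orbT /C => /(_ isT).
- by rewrite iS.
- by rewrite sN.
Qed.

Lemma indep_coord_sigma s s' E F : (forall i, i \in s -> i \notin s') ->
  coord_sigma s E -> coord_sigma s' F -> P (E `&` F) = (P E * P F)%E.
Proof.
move=> dis sE sF.
have indep_cyl F0 : cylinders s' F0 -> forall E0, coord_sigma s E0 ->
    P (E0 `&` F0) = (P E0 * P F0)%E.
  move=> cF0 E0 /coord_sigma_cylinders sE0.
  suff : <<s cylinders s >> `<=`
      [set E1 | measurable E1 /\ P (E1 `&` F0) = (P E1 * P F0)%E].
    by move=> /(_ E0 sE0) [].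
  apply: pi_dynkin_sub (@cylinders_setI s) _
    (dynkin_indep P (cylinders_measurable cF0)) => E1 cE1.
  by split; [exact: cylinders_measurable cE1|exact: indep_cylinders cE1 cF0].
suff : <<s cylinders s' >> `<=`
    [set F1 | measurable F1 /\ P (F1 `&` E) = (P F1 * P E)%E].
  by move=> /(_ F (coord_sigma_cylinders sF)) [_]; rewrite setIC muleC.
apply: pi_dynkin_sub (@cylinders_setI s') _
  (dynkin_indep P (coord_sigma_measurable sE)) => F1 cF1.
split; first exact: cylinders_measurable cF1.
by rewrite setIC indep_cyl // muleC.
Qed.

End coordinate_sigma_algebras.

Definition shift_path (T S : Type) (Y : int -> T -> S) (m : int) (w : T) : int -> S :=
  fun k => Y (m + k) w.

Definition window (m : int) (r : nat) : seq int :=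
  [seq m + (i%:Z - r%:Z) | i <- iota 0 r.*2.+1].

Lemma mem_window m r n : (n \in window m r) = (m - r%:Z <= n <= m + r%:Z).
Proof.
apply/idP/idP.
  by move=> /mapP [i]; rewrite mem_iota add0n => H ->; apply/andP; split; lia.
move=> /andP [H1 H2]; apply/mapP; exists (absz (n - m + r%:Z)%R).
  by rewrite mem_iota add0n; apply/andP; split; lia.
lia.
Qed.

Lemma window_disjoint m m' r : m + r%:Z < m' - r%:Z ->
  forall i, i \in window m r -> i \notin window m' r.
Proof.
by move=> H i; rewrite !mem_window => /andP [? ?]; apply/negP => /andP [? ?]; lia.
Qed.

Section shift_invariance.
Context {R : realType} {d : measure_display} {T : measurableType d}
  (P : probability T R) {d' : measure_display} {S : measurableType d'}
  (Y : int -> T -> S).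
Hypothesis Ymeas : forall n, measurable_fun setT (Y n).
Hypothesis Ylaw : forall n (A : set S), measurable A ->
  P (Y n @^-1` A) = P (Y 0 @^-1` A).
Hypothesis Yindep : forall (s : seq int) (A : int -> set S), uniq s ->
  (forall i, measurable (A i)) ->
  P (\bigcap_(i in [set` s]) (Y i @^-1` A i)) = (\prod_(i <- s) P (Y i @^-1` A i))%E.

Definition path_cylinder (s : seq int) (A : int -> set S) : set (int -> S) :=
  [set y | forall i, i \in s -> A i (y i)].

Definition path_cylinders : set (set (int -> S)) :=
  [set B | exists s (A : int -> set S),
    (forall i, measurable (A i)) /\ B = path_cylinder s A].

Lemma path_cylinders_setI : setI_closed path_cylinders.
Proof.
move=> E F [s [A [mA ->]]] [s' [B [mB ->]]].
exists (s ++ s'), (fun i => (if i \in s then A i else setT) `&`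
                            (if i \in s' then B i else setT)).
split; first by move=> i; apply: measurableI; case: ifP.
apply/seteqP; split => y /=.
  move=> [H1 H2] i _; split; case: ifP => // iS; [exact: H1|exact: H2].
move=> H; split => i iS; have := H i; rewrite mem_cat iS ?orbT => /(_ isT) [H1 H2].
- exact: H1.
- exact: H2.
Qed.

Lemma cylinder_events_sub : <<s @cylinder_events d' S >> `<=` <<s path_cylinders >>.
Proof.
apply: (smallest_sub (@smallest_sigma_algebra _ setT _)).
move=> E [k [A [mA ->]]]; apply: sub_gen_smallest.
exists [:: k], (fun i => if i == k then A else setT); split; first by move=> i; case: ifP.
apply/seteqP; split => y /=.
  by move=> Ak i; rewrite inE => /eqP ->; rewrite eqxx.
by move=> /(_ k); rewrite inE eqxx; apply.
Qed.

Lemma shift_path_cylinder m s A : shift_path Y m @^-1` path_cylinder s A =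
  cylinder Y (undup [seq m + i | i <- s]) (fun j => A (j - m)).
Proof.
have addKm i : m + i - m = i by rewrite addrC addKr.
apply/seteqP; split => w /=.
  by move=> H j; rewrite mem_undup => /mapP [i iS ->]; rewrite addKm; apply: H.
move=> H i iS; have := H (m + i); rewrite mem_undup addKm; apply.
by apply/mapP; exists i.
Qed.

Lemma measurable_shift_path_cylinder m s A : (forall i, measurable (A i)) ->
  measurable (shift_path Y m @^-1` path_cylinder s A).
Proof. by move=> mA; rewrite shift_path_cylinder; exact: measurable_cylinder. Qed.

Lemma prob_shift_path_cylinder m s A : (forall i, measurable (A i)) ->
  P (shift_path Y m @^-1` path_cylinder s A) =
  (\prod_(i <- undup s) P (Y 0 @^-1` A i))%E.
Proof.
move=> mA; rewrite shift_path_cylinder (prob_cylinder Yindep) ?undup_uniq //.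
rewrite undup_map_inj; last by move=> x y /addrI.
by rewrite big_map; apply: eq_bigr => i _; rewrite Ylaw // addrC addKr.
Qed.

Lemma shift_path_stationary m B : <<s path_cylinders >> B ->
  [/\ measurable (shift_path Y m @^-1` B), measurable (shift_path Y 0 @^-1` B) &
      P (shift_path Y m @^-1` B) = P (shift_path Y 0 @^-1` B)].
Proof.
move: B; apply: (@pi_dynkin_sub _ path_cylinders [set B |
  [/\ measurable (shift_path Y m @^-1` B), measurable (shift_path Y 0 @^-1` B) &
      P (shift_path Y m @^-1` B) = P (shift_path Y 0 @^-1` B)]] path_cylinders_setI).
- move=> E [s [A [mA ->]]].
  split; rewrite ?prob_shift_path_cylinder //;
    exact: (measurable_shift_path_cylinder _ _ mA).
- split.
  + by split; rewrite ?preimage_setT //; exact: measurableT.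
  + move=> E [m1 m2 e]; split; rewrite -?preimage_setC; try exact: measurableC.
    by rewrite !probability_setC // e.
  + move=> F tF HF; split; rewrite !preimage_bigcup.
    * by apply: bigcup_measurable => k _; case: (HF k).
    * by apply: bigcup_measurable => k _; case: (HF k).
    rewrite !measure_semi_bigcup //; try exact: trivIset_preimage;
      try by [apply: bigcup_measurable => k _; case: (HF k)|move=> k; case: (HF k)].
    by apply: eq_eseriesr => k _; case: (HF k).
Qed.

Lemma measurable_shift_path_preimage m B : <<s path_cylinders >> B ->
  measurable (shift_path Y m @^-1` B).
Proof. by case/(shift_path_stationary m). Qed.

Lemma prob_shift_path_preimage m B : <<s path_cylinders >> B ->
  P (shift_path Y m @^-1` B) = P (shift_path Y 0 @^-1` B).
Proof. by case/(shift_path_stationary m). Qed.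

Definition radius_sigma (r : nat) : set (set (int -> S)) :=
  <<s [set B | exists k (A : set S),
     [/\ (`|k| <= r)%N, measurable A & B = [set y : int -> S | A (y k)]]] >>.

Lemma radius_sigma_sub r : radius_sigma r `<=` <<s @cylinder_events d' S >>.
Proof.
apply: (smallest_sub (@smallest_sigma_algebra _ setT _)).
by move=> E [k [A [_ mA ->]]]; apply: sub_gen_smallest; exists k, A.
Qed.

Lemma shift_path_radius_sigma r m B : radius_sigma r B ->
  coord_sigma Y (window m r) (shift_path Y m @^-1` B).
Proof.
suff : radius_sigma r `<=`
    image_set_system setT (shift_path Y m) (coord_sigma Y (window m r)).
  by move=> /[apply]; rewrite /image_set_system /= setTI.
apply: smallest_sub; first exact/sigma_algebra_image/smallest_sigma_algebra.
move=> _ [k [A [kr mA ->]]]; rewrite /image_set_system /= setTI.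
apply: sub_gen_smallest; exists (m + k), A; split => //.
by rewrite mem_window; apply/andP; split; lia.
Qed.

Lemma filtr_shift_path r E : filtr Y r E ->
  exists2 B, radius_sigma r B & E = shift_path Y 0 @^-1` B.
Proof.
suff : filtr Y r `<=` preimage_set_system setT (shift_path Y 0) (radius_sigma r).
  by move=> /[apply] -[B GB <-]; exists B; rewrite ?setTI.
apply: smallest_sub; first exact/sigma_algebra_preimage/smallest_sigma_algebra.
move=> _ [n [A [nr mA ->]]]; exists [set y | A (y n)].
  by apply: sub_gen_smallest; exists n, A.
by rewrite setTI; apply/seteqP; split => w; rewrite /shift_path /= add0r.
Qed.

Lemma filtr_measurable r : filtr Y r `<=` measurable.
Proof.
apply: smallest_sub; first exact: sigma_algebra_measurable.
by move=> E [n [A [_ mA ->]]]; exact: measurable_Y_preimage.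
Qed.

End shift_invariance.

Definition block_center (r j : nat) : int := (j.+1 * r.*2.+1)%N%:Z.

Fixpoint blocks (r k : nat) : seq int :=
  if k is k'.+1 then blocks r k' ++ window (block_center r k') r else [::].

Lemma mem_blocks r k i : i \in blocks r k ->
  exists2 j, (j < k)%N & i \in window (block_center r j) r.
Proof.
elim: k => [//|k IH] /=; rewrite mem_cat => /orP [/IH [j jk ij]|iw].
  by exists j => //; exact: ltnW.
by exists k.
Qed.

Lemma blocks_disjoint r k i : i \in blocks r k -> i \notin window (block_center r k) r.
Proof.
move=> /mem_blocks [j jk ij]; apply: (window_disjoint _ ij); rewrite /block_center.
have : (j.+2 * r.*2.+1 <= k.+1 * r.*2.+1)%N by rewrite leq_mul2r ltnS jk orbT.
rewrite mulSn; move: (j.+1 * r.*2.+1)%N (k.+1 * r.*2.+1)%N => a b; lia.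
Qed.

Section renewal_factor.
Context {R : realType} {d : measure_display} {T : measurableType d}
  (P : probability T R) {d' : measure_display} {S : measurableType d'}
  (Y : int -> T -> S) (phi : (int -> S) -> bool) (p : nat -> R).
Hypothesis Ymeas : forall n, measurable_fun setT (Y n).
Hypothesis Ylaw : forall n (A : set S), measurable A ->
  P (Y n @^-1` A) = P (Y 0 @^-1` A).
Hypothesis Yindep : forall (s : seq int) (A : int -> set S), uniq s ->
  (forall i, measurable (A i)) ->
  P (\bigcap_(i in [set` s]) (Y i @^-1` A i)) = (\prod_(i <- s) P (Y i @^-1` A i))%E.
Hypothesis phi_meas : product_measurable phi.
Variable Rt : T -> option nat.
Hypothesis Rt_finite : P [set w | Rt w = None] = 0%E.
Hypothesis Rt_stopping : forall r, filtr Y r (R_le Rt r).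
Hypothesis Rt_codes : forall r (b : bool),
  filtr Y r ([set w | factor_process phi Y 0 w = b] `&` R_le Rt r).
Hypothesis p0 : p 0%N = 0.
Hypothesis p_ge0 : forall t, 0 <= p t.
Hypothesis p_sum1 : (\sum_(0 <= t <oo) (p t)%:E = 1)%E.
Hypothesis X_stationary : forall (s : seq int) (b : int -> bool) (m : int),
  P [set w | forall i, i \in s -> factor_process phi Y (i + m) w = b i]
  = P [set w | forall i, i \in s -> factor_process phi Y i w = b i].
Hypothesis X_recurrent : P [set w | forall N : int,
  (exists n, N < n /\ factor_process phi Y n w = true) /\
  (exists n, n < N /\ factor_process phi Y n w = true)] = 1%E.
Hypothesis X_gaps : forall ts : seq nat, all (fun t => (0 < t)%N) ts ->
  P (gap_event (factor_process phi Y) 0 ts)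
  = (P [set w | factor_process phi Y 0 w = true] * \prod_(t <- ts) (p t)%:E)%E.

Local Notation X := (factor_process phi Y).

Lemma phi_preimage_sigma b : <<s path_cylinders >> (phi @^-1` [set b]).
Proof. exact: cylinder_events_sub (phi_meas b). Qed.

Lemma measurable_X m b : measurable [set w | X m w = b].
Proof.
have -> : [set w | X m w = b] = shift_path Y m @^-1` (phi @^-1` [set b]) by [].
exact: (measurable_shift_path_preimage Ymeas Ylaw Yindep m (phi_preimage_sigma b)).
Qed.

Lemma measurable_X_pair a b : measurable [set w | X a w = true /\ X b w = true].
Proof. exact: measurableI (measurable_X a true) (measurable_X b true). Qed.

Lemma prob_X_shift m b : P [set w | X m w = b] = P [set w | X 0 w = b].
Proof.
have := X_stationary [:: 0] (fun _ => b) m.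
have one_site k : [set w | forall i, i \in [:: 0] -> X (i + k) w = b] = [set w | X k w = b].
  apply/seteqP; split => w /=; first by move=> /(_ 0); rewrite inE eqxx add0r; apply.
  by move=> H i; rewrite inE => /eqP ->; rewrite add0r.
have one_site0 : [set w | forall i, i \in [:: 0] -> X i w = b] = [set w | X 0 w = b].
  by rewrite -[RHS](one_site 0); apply/seteqP; split => w /= H i /H; rewrite addr0.
by rewrite one_site one_site0.
Qed.

Lemma prob_X_pair_shift a m : P [set w | X a w = true /\ X (a + m) w = true] =
  P [set w | X 0 w = true /\ X m w = true].
Proof.
have := X_stationary [:: 0; m] (fun _ => true) a.
have two_sites k : [set w | forall i, i \in [:: 0; m] -> X (i + k) w = true] =
    [set w | X k w = true /\ X (k + m) w = true].
  apply/seteqP; split => w /=.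
    move=> H; split; first by have := H 0; rewrite inE eqxx add0r; apply.
    by have := H m; rewrite !inE eqxx orbT addrC; apply.
  move=> [H1 H2] i; rewrite !inE => /orP[] /eqP ->; first by rewrite add0r.
  by rewrite addrC.
rewrite two_sites => ->; rewrite -[in RHS](add0r m) -two_sites.
by congr (P _); apply/seteqP; split => w /= H i /H; rewrite addr0.
Qed.

Lemma measurable_X_recurrent : measurable [set w | forall N : int,
  (exists n, N < n /\ X n w = true) /\ (exists n, n < N /\ X n w = true)].
Proof.
rewrite (_ : [set w | _] = ~` \bigcup_(N : int) ~` (
   (\bigcup_(n : int) [set w | N < n /\ X n w = true]) `&`
   (\bigcup_(n : int) [set w | n < N /\ X n w = true]))); last first.
  apply/seteqP; split => w /=.
    move=> H [N _ /= HN]; apply: HN; case: (H N) => [[n [h1 h2]] [n' [h1' h2']]].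
    by split; [exists n|exists n'].
  move=> H N; have : ((\bigcup_(n : int) [set w | N < n /\ X n w = true]) `&`
      (\bigcup_(n : int) [set w | n < N /\ X n w = true])) w.
    by apply: contrapT => nh; apply: H; exists N.
  by move=> [[n _ /= h] [n' _ /= h']]; split; [exists n|exists n'].
apply: measurableC; apply: countable_bigcupT_measurable; first exact: countableP.
move=> N; apply: measurableC; apply: measurableI;
  apply: countable_bigcupT_measurable; try exact: countableP;
  by move=> n; apply: measurable_guard_and; apply: measurable_X.
Qed.

Lemma prob_X0_gt0 : (0 < P [set w | X 0 w = true])%E.
Proof.
rewrite lt0e measure_ge0 andbT; apply/negP => /eqP q0.
have : (1 <= \sum_(0 <= k <oo) P [set w | X k%:Z w = true])%E.
  rewrite -X_recurrent; apply: (measure_sigma_subadditive _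
    (fun k => measurable_X _ _) measurable_X_recurrent).
  move=> w /= /(_ 0) [[n [n0 Xn]] _].
  by exists (absz n) => //=; rewrite gez0_abs //; exact: ltW.
by rewrite eseries0 ?lee_fin ?ler10 // => k _ _; rewrite prob_X_shift q0.
Qed.

Definition coded (r : nat) : set T := [set w | X 0 w = true] `&` R_le Rt r.

Lemma measurable_coded r : measurable (coded r).
Proof. exact (filtr_measurable Ymeas (@Rt_codes r true)). Qed.

Lemma coded_gt0 : exists r, (0 < P (coded r))%E.
Proof.
apply: contrapT => H.
have coded0 r : P (coded r) = 0%E.
  by apply/eqP; rewrite eq_le measure_ge0 andbT leNgt; apply/negP => h; apply: H; exists r.
have mNone : measurable [set w | Rt w = None].
  rewrite (_ : [set w | _] = ~` \bigcup_(r in setT) R_le Rt r); last first.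
    apply/seteqP; split => w /=; first by move=> h [r _ [m [h' _]]]; rewrite h in h'.
    case Rtw: (Rt w) => [m|] // H0; exfalso; apply: H0.
    by exists m => //; exists m; split.
  apply: measurableC; apply: bigcup_measurable => r _.
  exact (filtr_measurable Ymeas (@Rt_stopping r)).
pose F (k : nat) := if k is k'.+1 then coded k' else [set w | Rt w = None].
have mF k : measurable (F k) by case: k => [|k] //=; exact: measurable_coded.
have : (P [set w | X 0 w = true] <= \sum_(0 <= k <oo) P (F k))%E.
  apply: (measure_sigma_subadditive _ mF (measurable_X 0 true)).
  move=> w /= Xw; case Rtw: (Rt w) => [m|]; last by exists 0%N.
  by exists m.+1 => //=; split => //; exists m; split.
rewrite eseries0; last by case => [|k] _ _ /=; [exact: Rt_finite|exact: coded0].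
by rewrite leNgt prob_X0_gt0.
Qed.

Lemma measurable_gaps_from ts : forall a, measurable [set w | gaps_from X a ts w].
Proof.
elim: ts => [|t ts IH] a /=; first by rewrite (_ : [set w | True] = setT).
have -> : [set w | gaps_from X a (t :: ts) w] =
  \bigcap_(j in setT) [set w | (0 < j < t)%N -> X (a + j%:Z) w = false] `&`
  ([set w | X (a + t%:Z) w = true] `&` [set w | gaps_from X (a + t%:Z) ts w]).
  apply/seteqP; split => w /= [H1 [H2 H3]]; split => //.
  - by move=> j _; apply: H1.
  - by move=> j; apply: (H1 j I).
apply: measurableI; last by apply: measurableI => //; exact: measurable_X.
by apply: bigcap_measurableType => j _; apply: measurable_guard_imply; exact: measurable_X.
Qed.

Lemma measurable_gap_event ts : measurable (gap_event X 0 ts).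
Proof. exact: measurableI (measurable_X 0 true) (measurable_gaps_from ts 0). Qed.

Lemma prob_gap_event1 t : (0 < t)%N ->
  P (gap_event X 0 [:: t]) = (P [set w | X 0 w = true] * (p t)%:E)%E.
Proof. by move=> t0; rewrite X_gaps /= ?andbT // big_seq1. Qed.

(* If all jumps are multiples of g, two ones at a distance m not divisible by
   g are impossible: the first jump t after 0 is a multiple of g, and we
   recurse on the remaining distance m - t by stationarity. *)
Lemma lattice_X_pair_null g : (forall t, 0 < p t -> (g %| t)%N) ->
  forall m, (0 < m)%N -> ~~ (g %| m)%N ->
  P [set w | X 0 w = true /\ X m%:Z w = true] = 0%E.
Proof.
move=> Hg; elim/ltn_ind => m IH m0 gm.
pose G t := gap_event X 0 [:: t] `&` [set w | X m%:Z w = true].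
have mG t : measurable (G t).
  exact: measurableI _ _ (measurable_gap_event _) (measurable_X _ _).
pose F t := if (0 < t <= m)%N then G t else set0.
have mF t : measurable (F t) by rewrite /F; case: ifP.
have : (P [set w | X 0 w = true /\ X m%:Z w = true] <= \sum_(0 <= t <oo) P (F t))%E.
  apply: (measure_sigma_subadditive _ mF (measurable_X_pair _ _)).
  move=> w /= [X0 Xm].
  have ex : exists j, (0 < j)%N && (X j%:Z w == true) by exists m; rewrite m0 Xm.
  case: (ex_minnP ex) => t /andP [t0 /eqP Xt] tmin.
  have tm : (t <= m)%N by apply: tmin; rewrite m0 Xm.
  exists t => //; rewrite /F t0 tm /=; split => //; split => //.
  split; last by rewrite add0r.
  move=> j /andP [j0 jt]; rewrite add0r; case h: (X j%:Z w) => //.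
  by have := tmin j; rewrite j0 h /= leqNgt jt => /(_ isT).
rewrite eseries0 => [H|t _ _]; first by apply/eqP; rewrite eq_le H measure_ge0.
rewrite /F; case: ifP => [/andP [t0 tm]|_]; last by rewrite measure0.
have [g_t|ng_t] := boolP (g %| t)%N; last first.
  have gap0 : P (gap_event X 0 [:: t]) = 0%E.
    rewrite prob_gap_event1 // (_ : p t = 0) ?mule0 //.
    by apply/eqP; rewrite eq_le p_ge0 andbT leNgt; apply: contra ng_t => /Hg.
  exact: subset_measure0 (mG t) (measurable_gap_event _) (@subIsetl _ _ _) gap0.
have tlm : (t < m)%N by rewrite ltn_neqAle tm andbT; apply: contraNneq gm => <-.
have gmt : ~~ (g %| m - t)%N.
  by apply: contra gm => h; rewrite (_ : m = t + (m - t))%N ?dvdn_add //; lia.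
have pair0 : P [set w | X t%:Z w = true /\ X (t%:Z + (m - t)%N%:Z) w = true] = 0%E.
  by rewrite prob_X_pair_shift IH //; lia.
apply: (subset_measure0 (mG t) (measurable_X_pair _ _) _ pair0).
move=> w /= [[_ [_ [Xt _]]] Xm]; split; first by rewrite add0r in Xt.
by rewrite (_ : t%:Z + (m - t)%N%:Z = m%:Z) //; lia.
Qed.

Definition zeros_before (t : nat) : set T :=
  [set w | forall j : nat, (0 < j < t)%N -> X j%:Z w = false].

Lemma measurable_zeros_before t : measurable (zeros_before t).
Proof.
have -> : zeros_before t =
    \bigcap_(j in setT) [set w | (0 < j < t)%N -> X j%:Z w = false].
  by apply/seteqP; split => w /= H j; [move=> _; apply: H|apply: H].
by apply: bigcap_measurableType => j _; apply: measurable_guard_imply; exact: measurable_X.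
Qed.

(* The first jump is >= t exactly on the gap events [X_0 = 1, first 1 at s],
   s >= t, which are disjoint and contained in [zeros_before t]. *)
Lemma tail_mass_le t : (1 <= t)%N ->
  (P [set w | X 0 w = true] * \sum_(t <= s <oo) (p s)%:E <= P (zeros_before t))%E.
Proof.
move=> t1.
pose G s := if (t <= s)%N then gap_event X 0 [:: s] else set0.
have mG s : measurable (G s) by rewrite /G; case: ifP => // _; exact: measurable_gap_event.
have tG : trivIset setT G.
  move=> i j _ _ [w []]; rewrite /G.
  case: ifP => ti; case: ifP => tj // [X0 [Hi [Xi _]]] [_ [Hj [Xj _]]].
  rewrite add0r in Xi Xj; case: (ltngtP i j) => // ij.
    by move: (Hj i); rewrite Xi ij andbT; move/(_ (leq_trans t1 ti)).
  by move: (Hi j); rewrite Xj ij andbT; move/(_ (leq_trans t1 tj)).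
have sub : \bigcup_s G s `<=` zeros_before t.
  move=> w [s _]; rewrite /G; case: ifP => // ts [X0 [Hs _]] j /andP [j0 jt].
  by rewrite -(add0r j%:Z); apply: Hs; rewrite j0 /=; exact: leq_trans jt ts.
have mU : measurable (\bigcup_s G s) by apply: bigcup_measurable => s _.
have le_cup : (P (\bigcup_s G s) <= P (zeros_before t))%E.
  by apply: le_measure sub; rewrite inE //; exact: measurable_zeros_before.
apply: le_trans le_cup.
have -> : (\sum_(t <= s <oo) (p s)%:E =
    \sum_(0 <= s <oo) (if (t <= s)%N then (p s)%:E else 0))%E.
  by rewrite eseries_cond eseries_mkcondr.
rewrite measure_semi_bigcup //.
rewrite (probability_fine P (measurable_X 0 true)) -nneseriesZl; last first.
  by move=> i _; case: ifP => _ //; rewrite lee_fin.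
apply: lee_nneseries => i _.
  by case: ifP => _; rewrite ?mule0 // mule_ge0 // lee_fin ?fine_ge0 ?measure_ge0.
rewrite /G; case: ifP => ti; last by rewrite mule0 measure0.
have := prob_gap_event1 (leq_trans t1 ti).
by rewrite (probability_fine P (measurable_X 0 true)) => <-.
Qed.

Section translates.
Variables (r : nat) (B : set (int -> S)).
Hypothesis B_radius : radius_sigma r B.
Hypothesis B_coded : coded r = shift_path Y 0 @^-1` B.

Definition translate (m : int) : set T := shift_path Y m @^-1` B.

Let B_sigma : <<s path_cylinders >> B.
Proof. exact: cylinder_events_sub (radius_sigma_sub B_radius). Qed.

Lemma measurable_translate m : measurable (translate m).
Proof. exact: (measurable_shift_path_preimage Ymeas Ylaw Yindep m B_sigma). Qed.

Lemma prob_translate m : P (translate m) = P (coded r).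
Proof.
by rewrite B_coded; exact: (prob_shift_path_preimage Ymeas Ylaw Yindep m B_sigma).
Qed.

Lemma translate_coord_sigma m : coord_sigma Y (window m r) (translate m).
Proof. exact: shift_path_radius_sigma B_radius. Qed.

(* By shift invariance this is the case m = 0, where the set is empty since
   [coded r] forces X_0 = 1. *)
Lemma translate_X_false_null m : P (translate m `&` [set w | X m w = false]) = 0%E.
Proof.
have HB : <<s path_cylinders >> (B `&` phi @^-1` [set false]).
  exact: sigma_algebra_setI B_sigma (phi_preimage_sigma false).
have -> : translate m `&` [set w | X m w = false] =
    shift_path Y m @^-1` (B `&` phi @^-1` [set false]) by [].
rewrite (prob_shift_path_preimage Ymeas Ylaw Yindep m HB).
rewrite (_ : _ @^-1` _ = set0) ?measure0 //.
apply/seteqP; split => w //= [Bw phiw].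
have : coded r w by rewrite B_coded.
by move=> [X0 _]; move: phiw; rewrite /= -/(X 0 w) X0.
Qed.

Lemma prob_translate_pair m : r.*2%:Z < m ->
  P (translate 0 `&` translate m) = (P (coded r) * P (coded r))%E.
Proof.
move=> far; rewrite (indep_coord_sigma Ymeas Yindep (s := window 0 r) (s' := window m r)).
- by rewrite !prob_translate.
- by apply: window_disjoint; lia.
- exact: translate_coord_sigma.
- exact: translate_coord_sigma.
Qed.

Lemma translate_pair_null m : P [set w | X 0 w = true /\ X m w = true] = 0%E ->
  P (translate 0 `&` translate m) = 0%E.
Proof.
move=> pair0.
have mTX m' := measurableI _ _ (measurable_translate m') (measurable_X m' false).
have mTX2 := measurableU _ _ (mTX 0) (mTX m).
apply: (subset_measure0 (measurableI _ _ (measurable_translate 0) (measurable_translate m))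
  (measurableU _ _ (measurable_X_pair 0 m) mTX2)).
- move=> w [a0 am]; case h0: (X 0 w); case hm: (X m w);
    [by left|by right; right|by right; left..].
- apply: (null_set_setU (measurable_X_pair _ _) mTX2 pair0).
  by apply: (null_set_setU (mTX 0) (mTX m)); exact: translate_X_false_null.
Qed.

Fixpoint no_hit (k : nat) : set T :=
  if k is k'.+1 then no_hit k' `&` ~` translate (block_center r k') else setT.

Fixpoint missed (k : nat) : set T :=
  if k is k'.+1 then
    let c := block_center r k' in
    missed k' `|` (translate c `&` [set w | X c w = false])
  else set0.

Lemma no_hit_coord_sigma k : coord_sigma Y (blocks r k) (no_hit k).
Proof.
elim: k => [|k IH] /=; first exact: (sigma_algebra_setT (coord_sigma_sigma_algebra Y [::])).
set s := blocks r k ++ window (block_center r k) r.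
have sub_l : {subset blocks r k <= s} by move=> i; rewrite mem_cat => ->.
have sub_r : {subset window (block_center r k) r <= s}.
  by move=> i; rewrite mem_cat orbC => ->.
have sa := coord_sigma_sigma_algebra Y s.
apply: (sigma_algebra_setI sa); first exact: (coord_sigma_sub sub_l IH).
apply: (sigma_algebra_setC sa).
exact: (coord_sigma_sub sub_r (@translate_coord_sigma (block_center r k))).
Qed.

Lemma measurable_no_hit k : measurable (no_hit k).
Proof. exact (coord_sigma_measurable Ymeas (@no_hit_coord_sigma k)). Qed.

Lemma prob_no_hit k : P (no_hit k) = ((1 - fine (P (coded r))) ^+ k)%:E.
Proof.
elim: k => [|k IH] /=; first by rewrite expr0 probability_setT.
rewrite (indep_coord_sigma Ymeas Yindep
  (s := blocks r k) (s' := window (block_center r k) r)).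
- rewrite IH probability_setC; last exact: measurable_translate.
  by rewrite prob_translate (probability_fine P (measurable_coded r)) -EFinB -EFinM exprSr.
- exact: blocks_disjoint.
- exact: no_hit_coord_sigma.
- apply: (sigma_algebra_setC (coord_sigma_sigma_algebra Y _)).
  exact: translate_coord_sigma.
Qed.

Lemma measurable_missed k : measurable (missed k).
Proof.
elim: k => [|k IH] /=; first exact: measurable0.
apply: measurableU => //.
exact: measurableI (measurable_translate _) (measurable_X _ _).
Qed.

Lemma prob_missed k : P (missed k) = 0%E.
Proof.
elim: k => [|k IH] /=; first exact: measure0.
apply: null_set_setU => //; first exact: measurable_missed.
- by apply: measurableI; [exact: measurable_translate|exact: measurable_X].
- exact: translate_X_false_null.
Qed.

Lemma zeros_before_sub t k : (k * r.*2.+1 < t)%N ->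
  zeros_before t `<=` no_hit k `|` missed k.
Proof.
elim: k => [|k IH] kt w Zw /=; first by left.
have kt' : (k * r.*2.+1 < t)%N.
  by apply: leq_ltn_trans kt; rewrite leq_mul2r leqnSn orbT.
case: (IH kt' w Zw) => [Iw|Nw]; last by right; left.
have [Aw|nAw] := pselect (translate (block_center r k) w); last by left.
right; right; split => //; apply: (Zw (k.+1 * r.*2.+1)%N).
by apply/andP; split; [rewrite muln_gt0|exact: kt].
Qed.

Lemma prob_zeros_before_le t k : (k * r.*2.+1 < t)%N ->
  (P (zeros_before t) <= ((1 - fine (P (coded r))) ^+ k)%:E)%E.
Proof.
move=> kt; rewrite -prob_no_hit.
rewrite -(measureU0 (measurable_no_hit k) (measurable_missed k) (prob_missed k)).
apply: le_measure (zeros_before_sub kt); rewrite inE; first exact: measurable_zeros_before.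
by apply: measurableU; [exact: measurable_no_hit|exact: measurable_missed].
Qed.

End translates.

Lemma exists_p_gt0 : exists t, 0 < p t.
Proof.
apply: contrapT => H; move: p_sum1; rewrite eseries0.
  by move=> h; move: (@lte01 R); rewrite -h ltxx.
move=> t _ _; congr EFin; apply/eqP; rewrite eq_le p_ge0 andbT leNgt.
by apply/negP => h; apply: H; exists t.
Qed.

Lemma jumps_non_lattice : non_lattice p.
Proof.
move=> g Hg.
have [r coded_pos] := coded_gt0.
have [B B_radius B_coded] := filtr_shift_path (@Rt_codes r true).
case: g Hg => [|[//|g]] Hg.
  have [t pt] := exists_p_gt0.
  by have := Hg t pt; rewrite dvd0n => /eqP t0; rewrite t0 p0 ltxx in pt.
set m := (r.*2.+1 * g.+2).+1.
have gm : ~~ (g.+2 %| m)%N.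
  by rewrite /m -[X in (_ %| X)%N]addn1 dvdn_addr ?dvdn_mull // dvdn1.
have := translate_pair_null B_radius B_coded (lattice_X_pair_null Hg (ltn0Sn _) gm).
rewrite (prob_translate_pair B_radius B_coded); last by rewrite /m; nia.
by move/eqP; rewrite mule_eq0 orbb gt_eqF.
Qed.

Lemma jumps_exp_tails : exp_tails p.
Proof.
have [r coded_pos] := coded_gt0.
have [B B_radius B_coded] := filtr_shift_path (@Rt_codes r true).
set eps := fine (P (coded r)).
set q := fine (P [set w | X 0 w = true]).
have eps0 : 0 < eps by rewrite -lte_fin -(probability_fine P (measurable_coded r)).
have q0 : 0 < q by rewrite -lte_fin -(probability_fine P (measurable_X 0 true)) prob_X0_gt0.
set L := r.*2.+1.
exists (expR eps / q), (eps / L%:R); split; [|split].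
- by apply: divr_gt0 => //; exact: expR_gt0.
- by apply: divr_gt0 => //; rewrite ltr0n.
move=> t t1.
set k := (t.-1 %/ L)%N.
have kt : (k * L < t)%N by apply: (leq_ltn_trans (leq_divM _ _)); rewrite prednK.
have tk : (t <= k.+1 * L)%N.
  have := ltn_pmod t.-1 (ltn0Sn _ : (0 < L)%N); have := divn_eq t.-1 L.
  rewrite -/k mulSn.
  by move: (k * L)%N (t.-1 %% L)%N => a b; lia.
have tail := le_trans (tail_mass_le t1) (prob_zeros_before_le B_radius B_coded kt).
rewrite (probability_fine P (measurable_X 0 true)) -/q -/eps in tail.
have tail' : (\sum_(t <= s <oo) (p s)%:E <= (q^-1)%:E * ((1 - eps) ^+ k)%:E)%E.
  by rewrite lee_pdivlMl.
apply: (le_trans tail'); rewrite -EFinM lee_fin.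
have -> : expR eps / q * expR (- (eps / L%:R * t%:R)) =
    q^-1 * (expR eps * expR (- (eps / L%:R * t%:R))) by rewrite mulrAC mulrC.
apply: ler_wpM2l; first by rewrite invr_ge0 ltW.
apply: geometric_le_expR => //.
rewrite -lee_fin -(probability_fine P (measurable_coded r)) probability_le1 //.
exact: measurable_coded.
Qed.

End renewal_factor.

Theorem proposition3 (R : realType) (d : measure_display) (T : measurableType d)
  (P : probability T R) (d' : measure_display) (S : measurableType d')
  (Y : int -> T -> S) (phi : (int -> S) -> bool) (p : nat -> R) :
  iid_process P Y ->
  finitary_factor P Y phi ->
  stationary_renewal P (factor_process phi Y) p ->
  non_lattice p /\ exp_tails p.
Proof.
move=> [Ymeas Ylaw Yindep] [phim [Rt [RtN Rtf RtX]]] [[p0 pge0 psum] stat inf1 gapP].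
split; [eapply jumps_non_lattice|eapply jumps_exp_tails]; eassumption.
Qed.
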